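(* Under Assumptions 1, 2 and 3, let $\lambda_1>0$ be arbitrary and $\lambda_2=19\sqrt{\nu_n\rho_n n}$, and let $(\hat S,\hat L)$ and $\hat{\mathcal O}$ be as in the context. Then there is an absolute constant $c>0$ such that, with probability at least $1-c/n$, $\hat{\mathcal O}\cap\mathcal I=\emptyset$.
   Context: Let $n\ge2$ and let $[n]=\mathcal I\sqcup\mathcal O$ be a partition into inliers $\mathcal I$ and outliers $\mathcal O$, $s=|\mathcal O|$. Write $I=\mathcal I\times\mathcal I$ and $O=([n]\times[n])\setminus I$. For $M\in\mathbb R^{n\times n}$ and $\mathcal S\subset[n]\times[n]$, $M_{|\mathcal S}=\mathbb 1_{\mathcal S}\odot M$ ($\odot$ entrywise product, $\mathbb 1_{\mathcal S}$ indicator matrix); $(\cdot)_+$ is the entrywise positive part; $M_{\cdot,j}$, $M_{j,\cdot}$ denote the $j$-th column and row. Let $\rho_n\in(0,1/2]$, $\gamma_n\in(0,1]$, $k\ge1$. $L^*$ is a symmetric $n\times n$ matrix of rank $k$ with entries in $[0,\rho_n]$ and $L^*_{ij}=0$ whenever $i\in\mathcal O$ or $j\in\mathcal O$. $S^*$ is an $n\times n$ matrix with entries in $[0,\gamma_n]$, zero diagonal, $S^*_{\cdot,j}=0$ for all $j\in\mathcal I$, and $L^*+S^*+(S^* )^\top$ has entries in $[0,1]$. The adjacency matrix $A$ is symmetric with zero diagonal and $(A_{ij})_{i<j}$ are independent, $A_{ij}\sim\mathrm{Bernoulli}((L^*+S^*+(S^* )^\top)_{ij})$. The sampling matrix $\Omega$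 is symmetric with zero diagonal, $(\Omega_{ij})_{i<j}$ are independent $\mathrm{Bernoulli}(\Pi_{ij})$, $\Omega$ independent of $A$, $\Pi=\mathbb E[\Omega]$. $\Sigma=A-\mathbb E[A]$. Norms: $\|M\|_{L_2(\Pi)}^2=\sum_{i,j}\Pi_{ij}M_{ij}^2$, $\|M\|_{2,1}=\sum_j(\sum_iM_{ij}^2)^{1/2}$, $\|M\|_{2,\infty}=\max_j(\sum_iM_{ij}^2)^{1/2}$, $\|\cdot\|_F$ Frobenius, $\|\cdot\|_*$ nuclear, $\|\cdot\|_{op}$ operator norm, $\|M\|_\infty=\max_{ij}|M_{ij}|$. Assumption 1: there is $\mu_n>0$ with $\Pi_{ij}\ge\mu_n$ for all $(i,j)\in I$, $i\neq j$; and $\nu_n,\tilde\nu_n\in(0,1]$ satisfy $\sum_{j\in\mathcal I}\Pi_{ij}\le\nu_n n$ for all $i\in\mathcal I$ and $\sum_{j\in\mathcal O}\Pi_{ij}\le\tilde\nu_n s$ for all $i\in[n]$. Assumption 2: $\nu_n\rho_n\ge\log(n)/n$ and $\tilde\nu_n\gamma_n\ge\log(n)/n$. Assumption 3: $\nu_n\rho_n n\ge\tilde\nu_n\gamma_n s$. Estimator: for $\lambda_1,\lambda_2>0$, $\mathcal F(S,L)=\frac12\|\Omega\odot(A-L-S-S^\top)\|_F^2+\lambda_1\|L\|_*+\lambda_2\|S\|_{2,1}$; $(\hat S,\hat L)$ is any minimizer of $\mathcal F$ over $S\in[0,1]^{n\times n}$ and symmetric $L\in[0,\rho_n]^{n\times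 n}$, and (standing assumption that the upper box constraint on $S$ is inactive) $\hat S$ also minimizes $S\mapsto\mathcal F(S,\hat L)$ over nonnegative $S\in\mathbb R_+^{n\times n}$. The detected outliers are $\hat{\mathcal O}=\{j\in[n]:\hat S_{\cdot,j}\ne0\}$. *)

(* classical reals. Matrices are functions nat -> nat -> R,
   only entries with indices < n are meaningful. *)
From Stdlib Require Import Reals Lra List Arith.
From Stdlib Require Import ClassicalEpsilon.
Import ListNotations.
Open Scope R_scope.

Definition Mat := nat -> nat -> R.

Definition sumR (n : nat) (f : nat -> R) : R :=
  fold_right Rplus 0 (map f (seq 0 n)).

Definition card_out (n : nat) (isO : nat -> bool) : nat :=
  length (filter isO (seq 0 n)).

Definition frob2 (n : nat) (M : Mat) : R :=
  sumR n (fun i => sumR n (fun j => (M i j) ^ 2)).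

Definition norm21 (n : nat) (M : Mat) : R :=
  sumR n (fun j => sqrt (sumR n (fun i => (M i j) ^ 2))).

Definition vnorm (n : nat) (x : nat -> R) : R := sqrt (sumR n (fun i => (x i) ^ 2)).

Definition matvec (n : nat) (M : Mat) (x : nat -> R) : nat -> R :=
  fun i => sumR n (fun j => M i j * x j).

Definition opnorm_le (n : nat) (M : Mat) (t : R) : Prop :=
  forall x : nat -> R, vnorm n (matvec n M x) <= t * vnorm n x.

(* nuclear norm, as the dual norm of the operator norm:
   ||L||_* = sup { <L, M> : ||M||_op <= 1 } *)
Definition nuc_set (n : nat) (L : Mat) : R -> Prop :=
  fun v => exists M : Mat, opnorm_le n M 1 /\
             v = sumR n (fun i => sumR n (fun j => L i j * M i j)).

Definition nuc (n : nat) (L : Mat) : R :=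
  epsilon (inhabits 0) (fun t => is_lub (nuc_set n L) t).

Definition rank_le (n : nat) (M : Mat) (k : nat) : Prop :=
  exists u v : nat -> nat -> R, forall i j, (i < n)%nat -> (j < n)%nat ->
    M i j = sumR k (fun l => u l i * v l j).

Definition rank_eq (n : nat) (M : Mat) (k : nat) : Prop :=
  rank_le n M k /\ forall k', (k' < k)%nat -> ~ rank_le n M k'.

Definition Fobj (n : nat) (Om A : Mat) (lam1 lam2 : R) (S L : Mat) : R :=
  / 2 * frob2 n (fun i j => Om i j * (A i j - L i j - S i j - S j i))
  + lam1 * nuc n L + lam2 * norm21 n S.

Definition feasS (n : nat) (S : Mat) : Prop :=
  forall i j, (i < n)%nat -> (j < n)%nat -> 0 <= S i j <= 1.
Definition feasL (n : nat) (rho : R) (L : Mat) : Prop :=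
  forall i j, (i < n)%nat -> (j < n)%nat -> 0 <= L i j <= rho /\ L i j = L j i.
Definition nonnegS (n : nat) (S : Mat) : Prop :=
  forall i j, (i < n)%nat -> (j < n)%nat -> 0 <= S i j.

(* The event: every minimizer (Shat, Lhat) of F over the feasible set, such that
   Shat also minimizes S |-> F(S, Lhat) over nonnegative S, detects no inlier:
   Ohat ∩ I = ∅, i.e. Shat_{.,j} = 0 for every inlier j. *)
Definition no_inlier_detected (n : nat) (isO : nat -> bool) (rho lam1 lam2 : R)
    (A Om : Mat) : Prop :=
  forall Sh Lh : Mat,
    feasS n Sh -> feasL n rho Lh ->
    (forall S L, feasS n S -> feasL n rho L ->
       Fobj n Om A lam1 lam2 Sh Lh <= Fobj n Om A lam1 lam2 S L) ->
    (forall S, nonnegS n S ->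
       Fobj n Om A lam1 lam2 Sh Lh <= Fobj n Om A lam1 lam2 S Lh) ->
    forall j, (j < n)%nat -> isO j = false ->
      forall i, (i < n)%nat -> Sh i j = 0.

Definition pairs (n : nat) : list (nat * nat) :=
  flat_map (fun i => map (fun j => (i, j)) (seq (S i) (n - S i))) (seq 0 n).

(* symmetric zero-diagonal 0/1 matrix built from one bit per pair i<j *)
Fixpoint lookup (l : list ((nat * nat) * bool)) (i j : nat) : R :=
  match l with
  | [] => 0
  | ((a, b), x) :: t =>
      if ((Nat.eqb a i && Nat.eqb b j) || (Nat.eqb a j && Nat.eqb b i))%bool
      then (if x then 1 else 0) else lookup t i j
  end.

Definition mat_of_bits (n : nat) (bs : list bool) : Mat :=
  lookup (combine (pairs n) bs).

(* expectation of f over independent Bernoulli(p_k) bits *)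
Fixpoint expect (ps : list R) (f : list bool -> R) : R :=
  match ps with
  | [] => f []
  | p :: ps' => p * expect ps' (fun l => f (true :: l))
                + (1 - p) * expect ps' (fun l => f (false :: l))
  end.

Definition indic (P : Prop) : R :=
  if excluded_middle_informative P then 1 else 0.

(* Probability of an event E(A, Omega) where (A_ij)_{i<j} ~ Bern(P_ij) and
   (Omega_ij)_{i<j} ~ Bern(Pi_ij) all independent. *)
Definition prob_AO (n : nat) (P Pi : Mat) (E : Mat -> Mat -> Prop) : R :=
  expect (map (fun ij => P (fst ij) (snd ij)) (pairs n)) (fun ba =>
  expect (map (fun ij => Pi (fst ij) (snd ij)) (pairs n)) (fun bo =>
    indic (E (mat_of_bits n ba) (mat_of_bits n bo)))).

From Stdlib Require Import Reals List Bool Lra Lia Psatz Classical ClassicalEpsilon.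
Open Scope R_scope.

(* If the j-th column of a minimizer Sh of S |-> F(S, Lh) over nonnegative S is nonzero,
   deleting it lowers the penalty by lam2 * ||Sh_{.,j}|| while, by Young's inequality, the
   loss grows by less than that as soon as the sampled degree d_j = sum_i Om_ij^2 A_ij
   satisfies 4 d_j < lam2^2 = 361 nu rho n.  For an inlier j the edge probabilities
   Pi_ij (L* + S* + S*^T)_ij sum to at most 2 nu rho n (Assumptions 1 and 3), so
   E exp(d_j) <= exp(8 nu rho n), and Markov's inequality with Assumption 2 gives
   P(d_j >= 90 nu rho n) <= exp(-82 nu rho n) <= n^-2.  A union bound over the n columns
   gives the claim with c = 1. *)

Definition sumL {A} (l : list A) (f : A -> R) : R := fold_right Rplus 0 (map f l).

Lemma sumL_app {A} (l1 l2 : list A) f : sumL (l1 ++ l2) f = sumL l1 f + sumL l2 f.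
Proof.
  induction l1 as [|x l IH]; unfold sumL in *; simpl; [ring|].
  rewrite IH; ring.
Qed.

Lemma sumL_le {A} (l : list A) f g :
  (forall x, In x l -> f x <= g x) -> sumL l f <= sumL l g.
Proof.
  induction l as [|x l IH]; intros H; unfold sumL in *; simpl; [lra|].
  apply Rplus_le_compat; [apply H; left; reflexivity|].
  apply IH; intros; apply H; right; assumption.
Qed.

Lemma sumL_nonneg {A} (l : list A) f : (forall x, In x l -> 0 <= f x) -> 0 <= sumL l f.
Proof.
  induction l as [|x l IH]; intros H; unfold sumL in *; simpl; [lra|].
  apply Rplus_le_le_0_compat; [apply H; left; reflexivity|].
  apply IH; intros; apply H; right; assumption.
Qed.

Lemma sumL_map {A B} (h : A -> B) l f : sumL (map h l) f = sumL l (fun x => f (h x)).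
Proof. unfold sumL. rewrite map_map. reflexivity. Qed.

Lemma sumL_flat_map {A B} (F : A -> list B) l f :
  sumL (flat_map F l) f = sumL l (fun x => sumL (F x) f).
Proof.
  induction l as [|x l IH]; [reflexivity|].
  simpl flat_map. rewrite sumL_app, IH. reflexivity.
Qed.

Lemma sumR_S n f : sumR (S n) f = sumR n f + f n.
Proof.
  change (sumL (seq 0 (S n)) f = sumL (seq 0 n) f + f n).
  rewrite seq_S, sumL_app. unfold sumL; simpl. ring.
Qed.

Lemma sumR_ext n f g : (forall i, (i < n)%nat -> f i = g i) -> sumR n f = sumR n g.
Proof.
  induction n as [|n IH]; intros H; [reflexivity|].
  rewrite !sumR_S, H by lia. f_equal. apply IH. intros i Hi. apply H. lia.
Qed.

Lemma sumR_le n f g : (forall i, (i < n)%nat -> f i <= g i) -> sumR n f <= sumR n g.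
Proof.
  induction n as [|n IH]; intros H; [unfold sumR; simpl; lra|].
  rewrite !sumR_S. apply Rplus_le_compat; [apply IH; intros i Hi|]; apply H; lia.
Qed.

Lemma sumR_plus n f g : sumR n (fun i => f i + g i) = sumR n f + sumR n g.
Proof. induction n as [|n IH]; [unfold sumR; simpl; ring|]. rewrite !sumR_S, IH. ring. Qed.

Lemma sumR_minus n f g : sumR n (fun i => f i - g i) = sumR n f - sumR n g.
Proof. induction n as [|n IH]; [unfold sumR; simpl; ring|]. rewrite !sumR_S, IH. ring. Qed.

Lemma sumR_scal n c f : sumR n (fun i => c * f i) = c * sumR n f.
Proof. induction n as [|n IH]; [unfold sumR; simpl; ring|]. rewrite !sumR_S, IH. ring. Qed.

Lemma sumR_const n c : sumR n (fun _ => c) = INR n * c.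
Proof. induction n as [|n IH]; [unfold sumR; simpl; ring|]. rewrite sumR_S, IH, S_INR. ring. Qed.

Lemma sumR_zero n : sumR n (fun _ => 0) = 0.
Proof. rewrite sumR_const. ring. Qed.

Lemma sumR_nonneg n f : (forall i, (i < n)%nat -> 0 <= f i) -> 0 <= sumR n f.
Proof. intros H. rewrite <- (sumR_zero n). apply sumR_le. exact H. Qed.

Lemma sumR_term n f i : (forall k, (k < n)%nat -> 0 <= f k) -> (i < n)%nat -> f i <= sumR n f.
Proof.
  induction n as [|n IH]; intros H Hi; [lia|]. rewrite sumR_S.
  destruct (Nat.eq_dec i n) as [->|Hne].
  - pose proof (sumR_nonneg n f (fun k Hk => H k ltac:(lia))). lra.
  - pose proof (IH (fun k Hk => H k ltac:(lia)) ltac:(lia)). pose proof (H n ltac:(lia)). lra.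
Qed.

Lemma sumR_cond n (c : bool) f : sumR n (fun i => if c then f i else 0) = if c then sumR n f else 0.
Proof. destruct c; [reflexivity | apply sumR_zero]. Qed.

Lemma sumR_sel n j X : sumR n (fun i => if i =? j then X i else 0) = if j <? n then X j else 0.
Proof.
  induction n as [|n IH]; [reflexivity|]. rewrite sumR_S, IH.
  destruct (Nat.ltb_spec j n), (Nat.ltb_spec j (S n)), (Nat.eqb_spec n j); subst; try lia; ring.
Qed.

Lemma sumR_sel_lt n j X : (j < n)%nat -> sumR n (fun i => if i =? j then X i else 0) = X j.
Proof. intros Hj. rewrite sumR_sel. destruct (Nat.ltb_spec j n); [reflexivity | lia]. Qed.

Lemma sumR_sel_le n j X : 0 <= X j -> sumR n (fun i => if i =? j then X i else 0) <= X j.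
Proof. intros HX. rewrite sumR_sel. destruct (j <? n); lra. Qed.

Lemma exp_le_compat x y : x <= y -> exp x <= exp y.
Proof. intros [H | ->]; [left; apply exp_increasing, H | right; reflexivity]. Qed.

Lemma expect_ext ps f g : (forall l, f l = g l) -> expect ps f = expect ps g.
Proof.
  revert f g; induction ps as [|p ps IH]; intros f g H; simpl; [apply H|].
  f_equal; f_equal; apply IH; intros; apply H.
Qed.

Lemma expect_const ps c : expect ps (fun _ => c) = c.
Proof. induction ps as [|p ps IH]; simpl; [reflexivity|]. rewrite IH. ring. Qed.

Lemma expect_scal ps c f : expect ps (fun l => c * f l) = c * expect ps f.
Proof.
  revert f; induction ps as [|p ps IH]; intros f; simpl; [reflexivity|].
  rewrite (IH (fun l => f (true :: l))), (IH (fun l => f (false :: l))). ring.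
Qed.

Lemma expect_minus ps c f : expect ps (fun l => c - f l) = c - expect ps f.
Proof.
  revert f; induction ps as [|p ps IH]; intros f; simpl; [reflexivity|].
  rewrite (IH (fun l => f (true :: l))), (IH (fun l => f (false :: l))). ring.
Qed.

Lemma expect_sumR ps n f :
  expect ps (fun l => sumR n (fun j => f j l)) = sumR n (fun j => expect ps (f j)).
Proof.
  revert f; induction ps as [|p ps IH]; intros f; simpl; [reflexivity|].
  rewrite (IH (fun j l => f j (true :: l))), (IH (fun j l => f j (false :: l))).
  rewrite <- !sumR_scal, <- sumR_plus. reflexivity.
Qed.

Lemma expect_mono ps f g : (forall p, In p ps -> 0 <= p <= 1) ->
  (forall l, f l <= g l) -> expect ps f <= expect ps g.
Proof.
  revert f g; induction ps as [|p ps IH]; intros f g Hp H; simpl; [apply H|].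
  destruct (Hp p (or_introl eq_refl)).
  assert (Hps : forall q, In q ps -> 0 <= q <= 1) by (intros; apply Hp; right; assumption).
  pose proof (IH (fun l => f (true :: l)) (fun l => g (true :: l)) Hps (fun l => H _)).
  pose proof (IH (fun l => f (false :: l)) (fun l => g (false :: l)) Hps (fun l => H _)).
  nra.
Qed.

Lemma expect_nonneg ps f : (forall p, In p ps -> 0 <= p <= 1) ->
  (forall l, 0 <= f l) -> 0 <= expect ps f.
Proof. intros Hp H. rewrite <- (expect_const ps 0). apply expect_mono; assumption. Qed.

Fixpoint count_joint {A} (c : A -> bool) (qs : list A) (xs ys : list bool) : R :=
  match qs, xs, ys with
  | q :: qs', x :: xs', y :: ys' =>
      (if c q && x && y then 1 else 0) + count_joint c qs' xs' ys'
  | _, _, _ => 0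
  end.

Lemma bernoulli_pair_mgf_le (b : bool) p r : 0 <= p <= 1 -> 0 <= r <= 1 ->
  p * (r * exp (if b then 1 else 0) + (1 - r)) + (1 - p) <= exp (2 * (if b then p * r else 0)).
Proof.
  intros Hp Hr. destruct b.
  - pose proof exp_le_3. pose proof (exp_ineq1_le (2 * (p * r))).
    assert (p * r * (exp 1 - 1) <= p * r * 2) by (apply Rmult_le_compat_l; nra). nra.
  - rewrite Rmult_0_r, exp_0. lra.
Qed.

Lemma expect_exp_count_joint_cons {A} (c : A -> bool) (Q : A -> R) q qs x xs :
  expect (map Q (q :: qs)) (fun ys => exp (count_joint c (q :: qs) (x :: xs) ys))
  = (Q q * exp (if c q && x then 1 else 0) + (1 - Q q))
    * expect (map Q qs) (fun ys => exp (count_joint c qs xs ys)).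
Proof.
  cbn [map expect count_joint]. rewrite andb_true_r, andb_false_r.
  rewrite (expect_ext _ (fun ys => exp (0 + count_joint c qs xs ys))
                        (fun ys => exp (count_joint c qs xs ys)))
    by (intros; rewrite Rplus_0_l; reflexivity).
  rewrite (expect_ext _ _ (fun ys => exp (if c q && x then 1 else 0)
                                    * exp (count_joint c qs xs ys)))
    by (intros; apply exp_plus).
  rewrite expect_scal. ring.
Qed.

Lemma expect_exp_count_joint_le {A} (c : A -> bool) (P Q : A -> R) qs :
  (forall q, In q qs -> 0 <= P q <= 1 /\ 0 <= Q q <= 1) ->
  expect (map P qs) (fun xs => expect (map Q qs) (fun ys => exp (count_joint c qs xs ys)))
  <= exp (2 * sumL qs (fun q => if c q then P q * Q q else 0)).
Proof.
  induction qs as [|q qs IH]; intros H.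
  - simpl. unfold sumL; simpl. rewrite Rmult_0_r. lra.
  - destruct (H q (or_introl eq_refl)) as [Hp Hq].
    assert (Hqs : forall q', In q' qs -> 0 <= P q' <= 1 /\ 0 <= Q q' <= 1)
      by (intros; apply H; right; assumption).
    assert (HPqs : forall p, In p (map P qs) -> 0 <= p <= 1).
    { intros p Hin. apply in_map_iff in Hin as [q' [<- Hq']]. apply Hqs, Hq'. }
    assert (HQqs : forall p, In p (map Q qs) -> 0 <= p <= 1).
    { intros p Hin. apply in_map_iff in Hin as [q' [<- Hq']]. apply Hqs, Hq'. }
    set (Y := fun xs => expect (map Q qs) (fun ys => exp (count_joint c qs xs ys))).
    change (map P (q :: qs)) with (P q :: map P qs). cbn [expect].
    rewrite (expect_ext _ _ _ (expect_exp_count_joint_cons c Q q qs true)).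
    rewrite (expect_ext _ _ _ (expect_exp_count_joint_cons c Q q qs false)), !expect_scal.
    fold Y. rewrite andb_true_r, andb_false_r, exp_0.
    assert (HY : 0 <= expect (map P qs) Y).
    { apply expect_nonneg; [exact HPqs|]. intros xs.
      apply expect_nonneg; [exact HQqs | intros; left; apply exp_pos]. }
    change (sumL (q :: qs) ?f) with (f q + sumL qs f).
    rewrite Rmult_plus_distr_l, exp_plus.
    replace (P q * ((Q q * exp (if c q then 1 else 0) + (1 - Q q)) * expect (map P qs) Y)
             + (1 - P q) * ((Q q * 1 + (1 - Q q)) * expect (map P qs) Y))
      with ((P q * (Q q * exp (if c q then 1 else 0) + (1 - Q q)) + (1 - P q))
            * expect (map P qs) Y) by ring.
    apply Rmult_le_compat; [| exact HY | apply bernoulli_pair_mgf_le; assumption | apply IH, Hqs].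
    pose proof (exp_pos (if c q then 1 else 0)).
    apply Rplus_le_le_0_compat; [apply Rmult_le_pos|]; nra.
Qed.

Definition sym_prob_mat (n : nat) (M : Mat) : Prop :=
  forall a b, (a < n)%nat -> (b < n)%nat -> 0 <= M a b <= 1 /\ M a b = M b a.

Definition sampled_degree (n : nat) (Om A : Mat) (j : nat) : R :=
  sumR n (fun i => Om i j ^ 2 * A i j).

Definition inpair (j : nat) (q : nat * nat) : bool := (fst q =? j) || (snd q =? j).

Lemma lookup_01 l i j : 0 <= lookup l i j <= 1.
Proof.
  induction l as [|[[a b] x] t IH]; simpl; [lra|].
  destruct (_ || _); [destruct x; lra | exact IH].
Qed.

Lemma lookup_sym l i j : lookup l i j = lookup l j i.
Proof.
  induction l as [|[[a b] x] t IH]; simpl; [reflexivity|].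
  rewrite orb_comm, IH. reflexivity.
Qed.

Lemma mat_of_bits_sym_prob n bs : sym_prob_mat n (mat_of_bits n bs).
Proof. intros a b _ _. split; [apply lookup_01 | apply lookup_sym]. Qed.

Lemma sumR_pair_match_le n a b j :
  sumR n (fun i => if (a =? i) && (b =? j) || (a =? j) && (b =? i) then 1 else 0)
  <= if inpair j (a, b) then 1 else 0.
Proof.
  unfold inpair; cbn [fst snd].
  destruct ((a =? j) || (b =? j)) eqn:Hab.
  - set (o := if a =? j then b else a).
    apply Rle_trans with (sumR n (fun i => if i =? o then 1 else 0)); [|apply sumR_sel_le; lra].
    apply sumR_le; intros i _. unfold o; clear Hab.
    repeat match goal with |- context [?x =? ?y] => destruct (Nat.eqb_spec x y) end;
      simpl; first [lra | exfalso; lia].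
  - apply orb_false_iff in Hab as [Ha Hb].
    rewrite (sumR_ext _ _ (fun _ => 0)), sumR_zero; [lra|].
    intros i _. rewrite Ha, Hb, !andb_false_r. reflexivity.
Qed.

Lemma sampled_degree_le_count_joint n j qs xs ys :
  sampled_degree n (lookup (combine qs ys)) (lookup (combine qs xs)) j
  <= count_joint (inpair j) qs xs ys.
Proof.
  unfold sampled_degree. revert xs ys.
  induction qs as [|[a b] qs IH]; intros xs ys;
    [|destruct xs as [|x xs]; destruct ys as [|y ys]];
    try (rewrite (sumR_ext _ _ (fun _ => 0)) by (intros; simpl; ring);
         rewrite sumR_zero; simpl; lra).
  apply Rle_trans with (sumR n (fun i =>
      (if x && y then 1 else 0)
      * (if (a =? i) && (b =? j) || (a =? j) && (b =? i) then 1 else 0)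
      + lookup (combine qs ys) i j ^ 2 * lookup (combine qs xs) i j)).
  - apply sumR_le; intros i _. cbn [combine lookup].
    pose proof (lookup_01 (combine qs ys) i j). pose proof (lookup_01 (combine qs xs) i j).
    destruct (_ || _); [destruct x, y|]; simpl; nra.
  - rewrite sumR_plus, sumR_scal. cbn [count_joint].
    generalize (IH xs ys) (sumR_pair_match_le n a b j).
    destruct (inpair j (a, b)), x, y; simpl; lra.
Qed.

Lemma in_pairs n q : In q (pairs n) -> (fst q < snd q < n)%nat.
Proof.
  unfold pairs. intros H. apply in_flat_map in H as [a [Ha Hq]].
  apply in_map_iff in Hq as [b [<- Hb]]. apply in_seq in Ha. apply in_seq in Hb. simpl; lia.
Qed.

Lemma pair_probs_01 n (P : Mat) : (forall a b, (a < n)%nat -> (b < n)%nat -> 0 <= P a b <= 1) ->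
  forall p, In p (map (fun q => P (fst q) (snd q)) (pairs n)) -> 0 <= p <= 1.
Proof.
  intros HP p Hp. apply in_map_iff in Hp as [q [<- Hq]]. apply in_pairs in Hq. apply HP; lia.
Qed.

Lemma sumL_pairs_le n h : (forall a b, (a < n)%nat -> (b < n)%nat -> 0 <= h a b) ->
  sumL (pairs n) (fun q => h (fst q) (snd q)) <= sumR n (fun a => sumR n (h a)).
Proof.
  intros Hh. unfold pairs. rewrite sumL_flat_map.
  apply sumL_le. intros a Ha. apply in_seq in Ha. rewrite sumL_map.
  change (fun b => h (fst (a, b)) (snd (a, b))) with (h a).
  change (sumR n (h a)) with (sumL (seq 0 n) (h a)).
  replace (seq 0 n) with (seq 0 (S a) ++ seq (S a) (n - S a))
    by (rewrite <- seq_app; f_equal; lia).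
  rewrite sumL_app.
  assert (0 <= sumL (seq 0 (S a)) (h a)).
  { apply sumL_nonneg. intros b Hb. apply in_seq in Hb. apply Hh; lia. }
  lra.
Qed.

Lemma sumL_pairs_incident_le n j g : (j < n)%nat ->
  (forall a b, (a < n)%nat -> (b < n)%nat -> 0 <= g a b /\ g a b = g b a) ->
  sumL (pairs n) (fun q => if inpair j q then g (fst q) (snd q) else 0)
  <= 2 * sumR n (fun i => g i j).
Proof.
  intros Hj Hg.
  set (h := fun a b => (if a =? j then g a b else 0) + (if b =? j then g a b else 0)).
  assert (Hh : forall a b, (a < n)%nat -> (b < n)%nat -> 0 <= h a b).
  { intros a b Ha Hb. destruct (Hg a b Ha Hb). unfold h. destruct (a =? j), (b =? j); lra. }
  apply Rle_trans with (sumL (pairs n) (fun q => h (fst q) (snd q))).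
  { apply sumL_le. intros q Hq. apply in_pairs in Hq.
    destruct (Hg (fst q) (snd q) ltac:(lia) ltac:(lia)).
    unfold inpair, h. destruct (fst q =? j), (snd q =? j); simpl; lra. }
  eapply Rle_trans; [apply sumL_pairs_le, Hh|]. right.
  rewrite (sumR_ext n _ (fun a => (if a =? j then sumR n (g a) else 0) + g a j)).
  2: { intros a Ha. unfold h. rewrite sumR_plus, sumR_cond, (sumR_sel_lt n j (g a) Hj).
       reflexivity. }
  rewrite sumR_plus, (sumR_sel_lt n j (fun a => sumR n (g a)) Hj).
  rewrite (sumR_ext n (g j) (fun i => g i j)) by (intros i Hi; apply Hg; lia).
  ring.
Qed.

Lemma expect_exp_sampled_degree_le n j (P Pi : Mat) : (j < n)%nat ->
  sym_prob_mat n P -> sym_prob_mat n Pi ->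
  expect (map (fun q => P (fst q) (snd q)) (pairs n)) (fun xs =>
    expect (map (fun q => Pi (fst q) (snd q)) (pairs n)) (fun ys =>
      exp (sampled_degree n (mat_of_bits n ys) (mat_of_bits n xs) j)))
  <= exp (4 * sumR n (fun i => P i j * Pi i j)).
Proof.
  intros Hj HP HPi.
  assert (HP01 := pair_probs_01 n P (fun a b Ha Hb => proj1 (HP a b Ha Hb))).
  assert (HPi01 := pair_probs_01 n Pi (fun a b Ha Hb => proj1 (HPi a b Ha Hb))).
  eapply Rle_trans.
  { apply expect_mono; [exact HP01|]. intros xs. apply expect_mono; [exact HPi01|]. intros ys.
    apply exp_le_compat, sampled_degree_le_count_joint. }
  eapply Rle_trans.
  { apply (expect_exp_count_joint_le (inpair j) (fun q => P (fst q) (snd q))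
                                      (fun q => Pi (fst q) (snd q))).
    intros q Hq. apply in_pairs in Hq. split; [apply HP | apply HPi]; lia. }
  apply exp_le_compat.
  enough (sumL (pairs n) (fun q => if inpair j q then P (fst q) (snd q) * Pi (fst q) (snd q) else 0)
          <= 2 * sumR n (fun i => P i j * Pi i j)) by lra.
  apply (sumL_pairs_incident_le n j (fun a b => P a b * Pi a b) Hj).
  intros a b Ha Hb. destruct (HP a b Ha Hb) as [? HPab], (HPi a b Ha Hb) as [? HPiab].
  split; [nra | rewrite HPab, HPiab; reflexivity].
Qed.

Definition zero_col (j : nat) (S : Mat) : Mat := fun a b => if b =? j then 0 else S a b.

Lemma zero_col_nonneg n j S : nonnegS n S -> nonnegS n (zero_col j S).
Proof. intros HS a b Ha Hb. unfold zero_col. destruct (b =? j); [lra | apply HS; assumption]. Qed.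

Lemma sq_sub_le z d a : 0 <= d -> z <= a -> z ^ 2 - (z - d) ^ 2 <= 2 * a * d.
Proof. intros. nra. Qed.

Lemma residual_sq_zero_col_le (Om A L S : Mat) j a b :
  0 <= L a b -> 0 <= S a b -> 0 <= S b a ->
  (Om a b * (A a b - L a b - zero_col j S a b - zero_col j S b a)) ^ 2
  - (Om a b * (A a b - L a b - S a b - S b a)) ^ 2
  <= 2 * (Om a b ^ 2 * A a b) * ((if b =? j then S a b else 0) + (if a =? j then S b a else 0)).
Proof.
  intros HL Hab Hba. unfold zero_col.
  set (d := (if b =? j then S a b else 0) + (if a =? j then S b a else 0)).
  set (z := A a b - L a b - (if b =? j then 0 else S a b) - (if a =? j then 0 else S b a)).
  assert (Hz : A a b - L a b - S a b - S b a = z - d)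
    by (unfold z, d; destruct (b =? j), (a =? j); ring).
  rewrite Hz.
  replace (2 * (Om a b ^ 2 * A a b) * d) with (Om a b ^ 2 * (2 * A a b * d)) by ring.
  replace ((Om a b * z) ^ 2 - (Om a b * (z - d)) ^ 2) with (Om a b ^ 2 * (z ^ 2 - (z - d) ^ 2))
    by ring.
  apply Rmult_le_compat_l; [apply pow2_ge_0|].
  apply sq_sub_le; unfold d, z; destruct (b =? j), (a =? j); lra.
Qed.

Lemma frob2_zero_col_le n (Om A L S : Mat) j : (j < n)%nat ->
  sym_prob_mat n Om -> sym_prob_mat n A ->
  (forall a b, (a < n)%nat -> (b < n)%nat -> 0 <= L a b) -> nonnegS n S ->
  frob2 n (fun a b => Om a b * (A a b - L a b - zero_col j S a b - zero_col j S b a))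
  - frob2 n (fun a b => Om a b * (A a b - L a b - S a b - S b a))
  <= 4 * sumR n (fun i => Om i j ^ 2 * A i j * S i j).
Proof.
  intros Hj HOm HA HL HS. unfold frob2. rewrite <- sumR_minus.
  set (W := fun a b => 2 * (Om a b ^ 2 * A a b)).
  apply Rle_trans with (sumR n (fun a => sumR n (fun b =>
      (if b =? j then W a b * S a b else 0) + (if a =? j then W a b * S b a else 0)))).
  { apply sumR_le. intros a Ha. rewrite <- sumR_minus. apply sumR_le. intros b Hb.
    eapply Rle_trans; [apply residual_sq_zero_col_le; apply HL || apply HS; assumption|].
    unfold W. destruct (b =? j), (a =? j); lra. }
  right.
  rewrite (sumR_ext n _ (fun a => W a j * S a j
                         + (if a =? j then sumR n (fun b => W a b * S b a) else 0))).
  2: { intros a Ha. rewrite sumR_plus, sumR_cond, (sumR_sel_lt n j (fun b => W a b * S a b) Hj).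
       reflexivity. }
  rewrite sumR_plus, (sumR_sel_lt n j (fun a => sumR n (fun b => W a b * S b a)) Hj).
  rewrite (sumR_ext n (fun b => W j b * S b j) (fun b => W b j * S b j)).
  2: { intros b Hb. unfold W. destruct (HOm j b Hj Hb) as [_ ->], (HA j b Hj Hb) as [_ ->].
       reflexivity. }
  rewrite <- sumR_plus, <- sumR_scal. apply sumR_ext. intros i _. unfold W. ring.
Qed.

Lemma norm21_zero_col n S j : (j < n)%nat ->
  norm21 n (zero_col j S) = norm21 n S - sqrt (sumR n (fun i => S i j ^ 2)).
Proof.
  intros Hj. unfold norm21.
  rewrite (sumR_ext n _ (fun c => sqrt (sumR n (fun i => S i c ^ 2))
                        - (if c =? j then sqrt (sumR n (fun i => S i c ^ 2)) else 0))).
  - rewrite sumR_minus, (sumR_sel_lt n j (fun c => sqrt (sumR n (fun i => S i c ^ 2))) Hj).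
    reflexivity.
  - intros c _. unfold zero_col. destruct (c =? j); [|ring].
    rewrite (sumR_ext n _ (fun _ => 0)) by (intros; ring). rewrite sumR_zero, sqrt_0. ring.
Qed.

Lemma young_sumR n (w v : nat -> R) t : 0 < t -> (forall i, (i < n)%nat -> 0 <= w i <= 1) ->
  2 * sumR n (fun i => w i * v i) <= t * sumR n w + / t * sumR n (fun i => v i ^ 2).
Proof.
  intros Ht Hw. rewrite <- !sumR_scal, <- sumR_plus. apply sumR_le. intros i Hi.
  destruct (Hw i Hi).
  assert (0 <= / t * (t * w i - v i) ^ 2)
    by (apply Rmult_le_pos; [left; apply Rinv_0_lt_compat; lra | apply pow2_ge_0]).
  assert (/ t * (t * w i - v i) ^ 2 = t * w i ^ 2 - 2 * (w i * v i) + / t * v i ^ 2)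
    by (field; lra).
  assert (t * w i ^ 2 <= t * w i) by (apply Rmult_le_compat_l; nra).
  lra.
Qed.

Lemma minimizer_column_zero n (Om A L S : Mat) lam1 lam2 j :
  (j < n)%nat -> 0 < lam2 -> sym_prob_mat n Om -> sym_prob_mat n A ->
  (forall a b, (a < n)%nat -> (b < n)%nat -> 0 <= L a b) -> nonnegS n S ->
  4 * sampled_degree n Om A j < lam2 ^ 2 ->
  (forall S', nonnegS n S' -> Fobj n Om A lam1 lam2 S L <= Fobj n Om A lam1 lam2 S' L) ->
  forall i, (i < n)%nat -> S i j = 0.
Proof.
  intros Hj Hlam HOm HA HL HS Hdeg Hmin i Hi.
  destruct (Req_dec (S i j) 0) as [|Hne]; [assumption | exfalso].
  set (D := sampled_degree n Om A j).
  set (V := sqrt (sumR n (fun k => S k j ^ 2))).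
  assert (HV2 : V * V = sumR n (fun k => S k j ^ 2))
    by (apply sqrt_sqrt, sumR_nonneg; intros; apply pow2_ge_0).
  assert (HV : 0 < V).
  { apply sqrt_lt_R0. eapply Rlt_le_trans; [|apply (sumR_term n (fun k => S k j ^ 2) i)].
    - simpl. nra.
    - intros; apply pow2_ge_0.
    - exact Hi. }
  (* With this t, Young's bound on the loss increase is V (2 D / lam2 + lam2 / 2) < lam2 V. *)
  set (t := 2 * V / lam2).
  assert (Ht : 0 < t) by (unfold t; apply Rdiv_lt_0_compat; lra).
  pose proof (frob2_zero_col_le n Om A L S j Hj HOm HA HL HS) as Hfrob.
  pose proof (young_sumR n (fun k => Om k j ^ 2 * A k j) (fun k => S k j) t Ht) as Hyoung.
  pose proof (Hmin (zero_col j S) (zero_col_nonneg n j S HS)) as Hopt.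
  unfold Fobj in Hopt. rewrite (norm21_zero_col n S j Hj) in Hopt. fold V in Hopt.
  assert (Hw : forall k, (k < n)%nat -> 0 <= Om k j ^ 2 * A k j <= 1).
  { intros k Hk. destruct (HOm k j Hk Hj) as [[? ?] _], (HA k j Hk Hj) as [[? ?] _].
    split; [nra|]. assert (Om k j ^ 2 <= 1) by nra. nra. }
  specialize (Hyoung Hw). cbv beta in Hyoung; change (sumR n (fun k => Om k j ^ 2 * A k j)) with D in Hyoung. rewrite <- HV2 in Hyoung.
  assert (Heq : t * D + / t * (V * V) = V * (2 * D / lam2 + lam2 / 2)) by (unfold t; field; lra).
  assert (Hlt : 2 * D / lam2 < lam2 / 2).
  { apply (Rmult_lt_reg_r lam2); [lra|]. unfold Rdiv. rewrite Rmult_assoc, Rinv_l by lra.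
    unfold D. lra. }
  assert (V * (2 * D / lam2 + lam2 / 2) < V * lam2) by (apply Rmult_lt_compat_l; lra).
  lra.
Qed.

Lemma no_inlier_detected_of_low_degrees n isO rho lam1 lam2 (A Om : Mat) :
  0 < lam2 -> sym_prob_mat n Om -> sym_prob_mat n A ->
  (forall j, (j < n)%nat -> isO j = false -> 4 * sampled_degree n Om A j < lam2 ^ 2) ->
  no_inlier_detected n isO rho lam1 lam2 A Om.
Proof.
  intros Hlam HOm HA Hdeg Sh Lh HSh HLh _ Hmin j Hj Hoj.
  apply (minimizer_column_zero n Om A Lh Sh lam1 lam2 j); auto.
  - intros a b Ha Hb. apply (HLh a b Ha Hb).
  - intros a b Ha Hb. apply (HSh a b Ha Hb).
Qed.

Lemma expect2_indic_ge_union n ps qs (E : list bool -> list bool -> Prop)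
    (g : nat -> list bool -> list bool -> R) eps :
  (forall p, In p ps -> 0 <= p <= 1) -> (forall p, In p qs -> 0 <= p <= 1) ->
  (forall j xs ys, 0 <= g j xs ys) ->
  (forall xs ys, (forall j, (j < n)%nat -> g j xs ys < 1) -> E xs ys) ->
  (forall j, (j < n)%nat -> expect ps (fun xs => expect qs (fun ys => g j xs ys)) <= eps) ->
  1 - INR n * eps <= expect ps (fun xs => expect qs (fun ys => indic (E xs ys))).
Proof.
  intros Hps Hqs Hg HE Htail.
  assert (Hpt : forall xs ys, 1 - sumR n (fun j => g j xs ys) <= indic (E xs ys)).
  { intros xs ys. unfold indic. destruct (excluded_middle_informative (E xs ys)) as [_|HnE].
    - pose proof (sumR_nonneg n (fun j => g j xs ys) (fun j _ => Hg j xs ys)). lra.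
    - destruct (classic (exists j, (j < n)%nat /\ 1 <= g j xs ys)) as [[j [Hj Hgj]]|Hall].
      + pose proof (sumR_term n (fun j => g j xs ys) j (fun k _ => Hg k xs ys) Hj). lra.
      + exfalso. apply HnE, HE. intros j Hj.
        apply Rnot_le_lt. intros Hgj. apply Hall. exists j. split; assumption. }
  eapply Rle_trans; [|apply expect_mono; [exact Hps|]; intros xs;
                      apply expect_mono; [exact Hqs|]; intros ys; apply Hpt].
  rewrite (expect_ext _ _ (fun xs => 1 - sumR n (fun j => expect qs (fun ys => g j xs ys)))).
  2: { intros xs. rewrite expect_minus, expect_sumR. reflexivity. }
  rewrite expect_minus, expect_sumR.
  pose proof (sumR_le n _ (fun _ => eps) Htail) as Hsum. rewrite sumR_const in Hsum. lra.
Qed.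

Section InlierColumnMass.

Variables (n : nat) (isO : nat -> bool) (rho gam nu nut : R) (Lst Sst Pi : Mat).

Hypothesis HL : forall i j, (i < n)%nat -> (j < n)%nat -> 0 <= Lst i j <= rho.
Hypothesis HLO : forall i j, (i < n)%nat -> (j < n)%nat ->
  (isO i = true \/ isO j = true) -> Lst i j = 0.
Hypothesis HS : forall i j, (i < n)%nat -> (j < n)%nat -> 0 <= Sst i j <= gam.
Hypothesis HSI : forall i j, (i < n)%nat -> (j < n)%nat -> isO j = false -> Sst i j = 0.
Hypothesis HPi : sym_prob_mat n Pi.
Hypothesis Hrow : forall i, (i < n)%nat -> isO i = false ->
  sumR n (fun j => if isO j then 0 else Pi i j) <= nu * INR n.
Hypothesis Hrowo : forall i, (i < n)%nat ->
  sumR n (fun j => if isO j then Pi i j else 0) <= nut * INR (card_out n isO).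
Hypothesis HA3 : nu * rho * INR n >= nut * gam * INR (card_out n isO).

Lemma inlier_column_mass_le j : (j < n)%nat -> isO j = false ->
  sumR n (fun i => (Lst i j + Sst i j + Sst j i) * Pi i j) <= 2 * (nu * rho * INR n).
Proof.
  intros Hj Hoj.
  apply Rle_trans with (sumR n (fun i => gam * (if isO i then Pi j i else 0)
                                      + rho * (if isO i then 0 else Pi j i))).
  { apply sumR_le. intros i Hi. rewrite (HSI i j Hi Hj Hoj).
    destruct (HPi i j Hi Hj) as [_ ->], (HPi j i Hj Hi) as [[? ?] _].
    destruct (isO i) eqn:Hoi.
    - rewrite (HLO i j Hi Hj (or_introl Hoi)). pose proof (HS j i Hj Hi). nra.
    - rewrite (HSI j i Hj Hi Hoi). pose proof (HL i j Hi Hj). nra. }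
  rewrite sumR_plus, !sumR_scal.
  pose proof (Hrow j Hj Hoj). pose proof (Hrowo j Hj).
  pose proof (HL j j Hj Hj). pose proof (HS j j Hj Hj).
  assert (gam * sumR n (fun i => if isO i then Pi j i else 0)
          <= gam * (nut * INR (card_out n isO))) by (apply Rmult_le_compat_l; lra).
  assert (rho * sumR n (fun i => if isO i then 0 else Pi j i) <= rho * (nu * INR n))
    by (apply Rmult_le_compat_l; lra).
  lra.
Qed.

End InlierColumnMass.

Lemma inlier_weight_tail_le n j (P Pi : Mat) M : (1 <= n)%nat -> (j < n)%nat ->
  sym_prob_mat n P -> sym_prob_mat n Pi ->
  sumR n (fun i => P i j * Pi i j) <= 2 * M -> ln (INR n) <= M ->
  expect (map (fun q => P (fst q) (snd q)) (pairs n)) (fun xs =>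
    expect (map (fun q => Pi (fst q) (snd q)) (pairs n)) (fun ys =>
      exp (- (90 * M)) * exp (sampled_degree n (mat_of_bits n ys) (mat_of_bits n xs) j)))
  <= / (INR n * INR n).
Proof.
  intros Hn Hj HP HPi Hmass HM.
  assert (Hn1 : 1 <= INR n) by (apply (le_INR 1); exact Hn).
  assert (Hln : 0 <= ln (INR n)).
  { destruct Hn1 as [Hlt | <-]; [left; rewrite <- ln_1; apply ln_increasing; lra | rewrite ln_1; lra]. }
  rewrite (expect_ext _ _ (fun xs => exp (- (90 * M)) * expect (map (fun q => Pi (fst q) (snd q)) (pairs n))
              (fun ys => exp (sampled_degree n (mat_of_bits n ys) (mat_of_bits n xs) j))))
    by (intros; apply expect_scal).
  rewrite expect_scal.
  eapply Rle_trans.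
  { apply Rmult_le_compat_l; [left; apply exp_pos|]. apply expect_exp_sampled_degree_le; assumption. }
  rewrite <- exp_plus.
  replace (/ (INR n * INR n)) with (exp (- (ln (INR n) + ln (INR n))))
    by (rewrite exp_Ropp, exp_plus, exp_ln by lra; reflexivity).
  apply exp_le_compat. lra.
Qed.

Lemma ln_le_mul_of_ge_div x m : x >= ln m / m -> 0 < m -> ln m <= x * m.
Proof.
  intros Hx Hm. apply Rge_le in Hx.
  apply (Rmult_le_compat_r m) in Hx; [|lra].
  unfold Rdiv in Hx. rewrite Rmult_assoc, Rinv_l in Hx by lra. lra.
Qed.

Lemma four_degree_lt_lambda2_sq M d : 0 <= M -> exp (- (90 * M)) * exp d < 1 ->
  4 * d < (19 * sqrt M) ^ 2.
Proof.
  intros HM Hlt. rewrite <- exp_plus in Hlt.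
  assert (d < 90 * M).
  { apply Rnot_le_lt. intros Hd. rewrite <- exp_0 in Hlt.
    apply exp_lt_inv in Hlt. lra. }
  replace ((19 * sqrt M) ^ 2) with (361 * (sqrt M * sqrt M)) by ring.
  rewrite sqrt_sqrt by exact HM. lra.
Qed.

Theorem theorem2 :
  exists c : R, 0 < c /\
  forall (n : nat) (isO : nat -> bool) (rho gam : R) (k : nat)
         (Lst Sst Pi : Mat) (mu nu nut lam1 : R),
    (2 <= n)%nat ->
    0 < rho <= / 2 -> 0 < gam <= 1 -> (1 <= k)%nat ->
    (* L* : symmetric, rank k, entries in [0,rho], zero on outlier rows/columns *)
    (forall i j, (i < n)%nat -> (j < n)%nat -> Lst i j = Lst j i) ->
    rank_eq n Lst k ->
    (forall i j, (i < n)%nat -> (j < n)%nat -> 0 <= Lst i j <= rho) ->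
    (forall i j, (i < n)%nat -> (j < n)%nat -> (isO i = true \/ isO j = true) -> Lst i j = 0) ->
    (* S* : entries in [0,gam], zero diagonal, zero inlier columns *)
    (forall i j, (i < n)%nat -> (j < n)%nat -> 0 <= Sst i j <= gam) ->
    (forall i, (i < n)%nat -> Sst i i = 0) ->
    (forall i j, (i < n)%nat -> (j < n)%nat -> isO j = false -> Sst i j = 0) ->
    (forall i j, (i < n)%nat -> (j < n)%nat -> 0 <= Lst i j + Sst i j + Sst j i <= 1) ->
    (* Pi = E[Omega] : symmetric, zero diagonal, entries in [0,1] *)
    (forall i j, (i < n)%nat -> (j < n)%nat -> 0 <= Pi i j <= 1 /\ Pi i j = Pi j i) ->
    (forall i, (i < n)%nat -> Pi i i = 0) ->
    (* Assumption 1 *)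
    0 < mu ->
    (forall i j, (i < n)%nat -> (j < n)%nat -> isO i = false -> isO j = false ->
       i <> j -> mu <= Pi i j) ->
    0 < nu <= 1 -> 0 < nut <= 1 ->
    (forall i, (i < n)%nat -> isO i = false ->
       sumR n (fun j => if isO j then 0 else Pi i j) <= nu * INR n) ->
    (forall i, (i < n)%nat ->
       sumR n (fun j => if isO j then Pi i j else 0) <= nut * INR (card_out n isO)) ->
    (* Assumption 2 *)
    nu * rho >= ln (INR n) / INR n ->
    nut * gam >= ln (INR n) / INR n ->
    (* Assumption 3 *)
    nu * rho * INR n >= nut * gam * INR (card_out n isO) ->
    0 < lam1 ->
    prob_AO n (fun i j => Lst i j + Sst i j + Sst j i) Pi
      (no_inlier_detected n isO rho lam1 (19 * sqrt (nu * rho * INR n)))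
    >= 1 - c / INR n.
Proof.
  exists 1. split; [lra|].
  intros n isO rho gam k Lst Sst Pi mu nu nut lam1 Hn _ _ _ HLsym _ HL HLO HS _ HSI HP01 HPi
    _ _ _ _ _ Hrow Hrowo HA2 _ HA3 _.
  set (M := nu * rho * INR n).
  set (P := fun i j => Lst i j + Sst i j + Sst j i).
  assert (Hn2 : 2 <= INR n) by (apply (le_INR 2); exact Hn).
  assert (HlnM : ln (INR n) <= M) by (apply ln_le_mul_of_ge_div; [exact HA2 | lra]).
  assert (HM : 0 < M) by (pose proof (ln_increasing 1 (INR n)); rewrite ln_1 in *; lra).
  assert (HP : sym_prob_mat n P).
  { intros a b Ha Hb. split; [apply HP01; assumption|]. unfold P. rewrite HLsym by assumption. ring. }
  (* Any threshold T M with 4 T < 19^2 and T - 8 >= 2 would do in place of 90 M. *)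
  pose (g j xs ys := if isO j then 0
                     else exp (- (90 * M)) * exp (sampled_degree n (mat_of_bits n ys) (mat_of_bits n xs) j)).
  apply Rle_ge. replace (1 - 1 / INR n) with (1 - INR n * / (INR n * INR n)) by (field; lra).
  apply (expect2_indic_ge_union n _ _ _ g).
  - apply pair_probs_01. intros a b Ha Hb. apply HP; assumption.
  - apply pair_probs_01. intros a b Ha Hb. apply HPi; assumption.
  - intros j xs ys. unfold g. destruct (isO j); [lra|]. apply Rmult_le_pos; left; apply exp_pos.
  - intros xs ys Hsmall.
    apply no_inlier_detected_of_low_degrees; try apply mat_of_bits_sym_prob.
    { apply Rmult_lt_0_compat; [lra | apply sqrt_lt_R0, HM]. }
    intros j Hj Hoj. apply four_degree_lt_lambda2_sq; [lra|].
    specialize (Hsmall j Hj). unfold g in Hsmall. rewrite Hoj in Hsmall. exact Hsmall.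
  - intros j Hj. unfold g. destruct (isO j) eqn:Hoj.
    + rewrite (expect_ext _ _ (fun _ => 0)), expect_const by (intros; apply expect_const).
      left. apply Rinv_0_lt_compat. nra.
    + apply inlier_weight_tail_le; [lia | lia | exact HP | exact HPi | | exact HlnM].
      apply (inlier_column_mass_le n isO rho gam nu nut Lst Sst Pi); assumption.
Qed.
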